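(* Every $2$-uniform projective Hjelmslev plane is isomorphic to an incidence structure produced by the Construction (Algorithm 1) described in the context, for a suitable integer $m\ge 2$, projective plane $\mathcal{P}$ of order $m$, affine planes $\mathcal{A}_P$, orthogonal arrays $\mathcal{O}_l$, and admissible choices $\pi,\beta$.
   Context: An orthogonal array $OA(2,k,v)$ is a $v^2\times k$ array with entries from a $v$-element symbol set such that in any two columns every ordered pair of symbols occurs in exactly one row. A projective plane of order $m$ has $m+1$ points on each line and $m+1$ lines through each point; an affine plane of order $m$ has $m^2$ points, $m$ points per line, and its lines split into $m+1$ parallel classes, each consisting of $m$ pairwise disjoint lines covering all points. Construction (Algorithm 1). Let $\mathcal{P}$ be a projective plane of order $m$. For each point $P$ of $\mathcal{P}$ let $\mathcal{A}_P$ be an affine plane of order $m$ (not necessarily all the same). For each line $l$ of $\mathcal{P}$ let $\mathcal{O}_l$ be an $OA(2,m+1,m)$ on a symbol set $\Sigma_l$ whose $m+1$ columns are labelled bijectively by the $m+1$ points of $l$. For each incident pair $P\in l$ choose a parallel class $\pi(P,l)$ of $\mathcal{A}_P$ such that, for each fixed $P$, the map $l\mapsto\pi(P,l)$ is a bijection from the $m+1$ lines of $\mathcal{P}$ through $P$ to the $m+1$ parallel classes of $\mathcal{A}_P$; and choose a bijection $\beta_{P,l}$ from $\Sigma_l$ to the $m$ lines of $\pi(P,l)$. The points of the constructed structure are the pairs $(P,x)$ with $P$ a point of $\mathcal{P}$ and $x$ a point of $\mathcal{A}_P$. For each line $l$ of $\mathcal{P}$ and each row $r$ of $\mathcal{O}_l$,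 there is the line $\bigcup_{P\in l}\{(P,x): x\in \beta_{P,l}(\mathcal{O}_l(r,P))\}$, where $\mathcal{O}_l(r,P)$ is the entry in row $r$ and the column labelled $P$. Incidence is membership. Projective Hjelmslev plane: an incidence structure $\mathcal{H}$ such that (1) any two points are incident with at least one line; (2) any two lines meet in at least one point; (3) two lines meeting in more than one point are called neighbours; (4) two points incident with more than one common line are called neighbours; (5) there is an incidence-preserving surjection $\phi$ from $\mathcal{H}$ onto an ordinary projective plane with $\phi(P)=\phi(Q)\iff P\sim Q$ for points and $\phi(g)=\phi(h)\iff g\sim h$ for lines (where $\sim$ is the neighbour relation, reflexively extended). Affine Hjelmslev plane: an incidence structure such that any two points are incident with at least one line, lines meeting in more than one point are neighbours, and there is an incidence-preserving surjection $\phi$ onto an ordinary affine plane with $\phi(P)=\phi(Q)\iff P\sim Q$, $\phi(g)=\phi(h)\iff g\sim h$, and lines with no common point mapped to parallel lines. Uniformity: a $1$-uniform projective (resp. affine) Hjelmslev plane is an ordinary projective (resp. affine) plane. For a point $P$, the point-neighbourhood restriction $\bar P$ is the incidence structure whose points are the points $Q\sim P$ and whose lines are the nonempty sets $g\cap\bar P$ for lines $g$ of $\mathcal{H}$. A projective (resp. affine) Hjelmslev plane is $n$-uniform if for every point $P$, $\bar P$ is an $(n-1)$-uniform affine Hjelmslev plane, and every line of $\bar P$ is the restriction of the same number of lines of $\mathcal{H}$. *)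

From mathcomp Require Import all_boot.
Set Implicit Arguments. Unset Strict Implicit. Unset Printing Implicit Defensive.

Definition nbP {Pt Ln : finType} (I : Pt -> Ln -> bool) (p q : Pt) : bool :=
  (p == q) || (1 < #|[set g | I p g && I q g]|).
Definition nbL {Pt Ln : finType} (I : Pt -> Ln -> bool) (g h : Ln) : bool :=
  (g == h) || (1 < #|[set p | I p g && I p h]|).

Definition proj_plane {Pt Ln : finType} (I : Pt -> Ln -> bool) : Prop :=
  (forall p q : Pt, p != q -> exists! g, I p g && I q g) /\
  (forall g h : Ln, g != h -> exists! p, I p g && I p h) /\
  (exists a b c d : Pt, uniq [:: a; b; c; d] /\
     ~~ [exists g, [&& I a g, I b g & I c g]] /\
     ~~ [exists g, [&& I a g, I b g & I d g]] /\
     ~~ [exists g, [&& I a g, I c g & I d g]] /\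
     ~~ [exists g, [&& I b g, I c g & I d g]]).

Definition proj_plane_order {Pt Ln : finType} (I : Pt -> Ln -> bool) (m : nat) : Prop :=
  proj_plane I /\
  (forall g : Ln, #|[set p | I p g]| = m.+1) /\
  (forall p : Pt, #|[set g | I p g]| = m.+1).

Definition affine_plane {Pt Ln : finType} (I : Pt -> Ln -> bool) : Prop :=
  (forall p q : Pt, p != q -> exists! g, I p g && I q g) /\
  (forall (p : Pt) (g : Ln), ~~ I p g ->
     exists! h, I p h && [forall q, ~~ (I q g && I q h)]) /\
  (exists a b c : Pt, uniq [:: a; b; c] /\ ~~ [exists g, [&& I a g, I b g & I c g]]).

Definition parallel {Pt Ln : finType} (I : Pt -> Ln -> bool) (g h : Ln) : bool :=
  (g == h) || [forall q, ~~ (I q g && I q h)].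
Definition par_class {Pt Ln : finType} (I : Pt -> Ln -> bool) (g : Ln) : {set Ln} :=
  [set h | parallel I g h].
Definition par_classes {Pt Ln : finType} (I : Pt -> Ln -> bool) : {set {set Ln}} :=
  [set par_class I g | g : Ln].

Definition affine_plane_order {Pt Ln : finType} (I : Pt -> Ln -> bool) (m : nat) : Prop :=
  affine_plane I /\ #|Pt| = m ^ 2 /\ (forall g : Ln, #|[set p | I p g]| = m) /\
  #|par_classes I| = m.+1.

Definition proj_hjelmslev {Pt Ln : finType} (I : Pt -> Ln -> bool) : Prop :=
  (forall p q : Pt, exists g, I p g && I q g) /\
  (forall g h : Ln, exists p, I p g && I p h) /\
  exists (Qpt Qln : finType) (QI : Qpt -> Qln -> bool)
         (phiP : Pt -> Qpt) (phiL : Ln -> Qln),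
    proj_plane QI /\
    (forall y, exists x, phiP x = y) /\ (forall y, exists x, phiL x = y) /\
    (forall p g, I p g -> QI (phiP p) (phiL g)) /\
    (forall p q, phiP p = phiP q <-> nbP I p q) /\
    (forall g h, phiL g = phiL h <-> nbL I g h).

Definition restr {Pt Ln : finType} (I : Pt -> Ln -> bool) (P : Pt) (g : Ln) : {set Pt} :=
  [set q | I q g && nbP I q P].
Definition restr_lines {Pt Ln : finType} (I : Pt -> Ln -> bool) (P : Pt) : {set {set Pt}} :=
  [set S : {set Pt} | (S != set0) && [exists g, S == restr I P g]].
Definition restr_inc {Pt Ln : finType} (I : Pt -> Ln -> bool) (P : Pt)
  (q : {q : Pt | nbP I q P}) (S : {S : {set Pt} | S \in restr_lines I P}) : bool :=
  val q \in val S.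

(* 2-uniform projective Hjelmslev plane: each \bar P is a 1-uniform affine
   Hjelmslev plane (= ordinary affine plane) and every line of \bar P is the
   restriction of the same number of lines. *)
Definition two_uniform_PH {Pt Ln : finType} (I : Pt -> Ln -> bool) : Prop :=
  proj_hjelmslev I /\
  forall P : Pt,
    affine_plane (@restr_inc Pt Ln I P) /\
    exists c : nat, forall S, S \in restr_lines I P ->
      #|[set g | restr I P g == S]| = c.

Definition inc_iso {Pt Ln Pt' Ln' : finType} (I : Pt -> Ln -> bool)
  (I' : Pt' -> Ln' -> bool) : Prop :=
  exists (f : Pt -> Pt') (g : Ln -> Ln'),
    bijective f /\ bijective g /\ forall p l, I' (f p) (g l) = I p l.

(* OA(2, m+1, m) attached to line l: symbols Sym, rows Row, entry O r P in the
   column labelled by the point P of l. *)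
Definition OA_on {Ppt Pln : finType} (PI : Ppt -> Pln -> bool) (m : nat) (l : Pln)
  {Sym Row : finType} (O : Row -> Ppt -> Sym) : Prop :=
  #|Sym| = m /\
  forall P Q : Ppt, PI P l -> PI Q l -> P != Q -> bijective (fun r => (O r P, O r Q)).

Definition admissible_pi {Ppt Pln : finType} (PI : Ppt -> Pln -> bool)
  {APt ALn : Ppt -> finType} (AI : forall P, APt P -> ALn P -> bool)
  (pi : forall P : Ppt, Pln -> {set ALn P}) : Prop :=
  forall P : Ppt,
    (forall l, PI P l -> pi P l \in par_classes (AI P)) /\
    (forall l l', PI P l -> PI P l' -> pi P l = pi P l' -> l = l') /\
    (forall C, C \in par_classes (AI P) -> exists l, PI P l /\ pi P l = C).

Definition admissible_beta {Ppt Pln : finType} (PI : Ppt -> Pln -> bool)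
  {ALn : Ppt -> finType} {Sym : Pln -> finType}
  (pi : forall P : Ppt, Pln -> {set ALn P})
  (beta : forall (P : Ppt) (l : Pln), Sym l -> ALn P) : Prop :=
  forall P l, PI P l ->
    (forall s, beta P l s \in pi P l) /\ injective (beta P l) /\
    (forall h, h \in pi P l -> exists s, beta P l s = h).

Definition construction_inc {Ppt Pln : finType} (PI : Ppt -> Pln -> bool)
  {APt ALn : Ppt -> finType} (AI : forall P, APt P -> ALn P -> bool)
  {Sym Row : Pln -> finType} (O : forall l, Row l -> Ppt -> Sym l)
  (beta : forall (P : Ppt) (l : Pln), Sym l -> ALn P)
  (x : {P : Ppt & APt P}) (y : {l : Pln & Row l}) : bool :=
  PI (tag x) (tag y) &&
  AI (tag x) (tagged x) (beta (tag x) (tag y) (O (tag y) (tagged y) (tag x))).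

(* Let phi be the epimorphism of the Hjelmslev plane H onto the ordinary
   projective plane Q.  We take Q itself as the plane P of the construction;
   for a point P of Q the affine plane A_P is the neighbourhood restriction
   of a chosen point over P, and the rows of the array O_l are the lines g of
   H with phi g = l.  The parallel class pi(P,l) consists of the restrictions
   to A_P of the lines over l, and the entry of row g in column P is the index
   of the restriction of g in an enumeration of pi(P,l).

   The core of the argument is the analysis of a
   neighbourhood: each pi(P,l) is a parallel class, l |-> pi(P,l) is a
   bijection from the pencil of P onto the parallel classes, and counting
   then gives the order m of every neighbourhood, of Q, and the orthogonal
   array property (a line over l is determined by its restrictions at two
   distinct points of l, and the lines over l number m^2).  The theorem is
   the assembly of these facts; of 2-uniformity only the fact that every
   neighbourhood is an affine plane is needed. *)
From mathcomp Require Import all_boot.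
Set Implicit Arguments. Unset Strict Implicit. Unset Printing Implicit Defensive.

Lemma card_le_rel (A B : finType) (SA : {set A}) (SB : {set B}) (R : A -> B -> bool) :
  (forall a, a \in SA -> exists b, (b \in SB) && R a b) ->
  (forall a a' b, a \in SA -> a' \in SA -> b \in SB -> R a b -> R a' b -> a = a') ->
  #|SA| <= #|SB|.
Proof.
move=> Hex Hinj.
case: (set_0Vmem SA) => [->|[a0 Ha0]]; first by rewrite cards0.
have [b0 _] := Hex a0 Ha0.
pose f a := odflt b0 [pick b in SB | R a b].
have fP a : a \in SA -> (f a \in SB) && R a (f a).
  move=> Ha; rewrite /f; case: pickP => [b /andP[-> ->]|H] //=.
  by have [b /andP[Hb Hr]] := Hex a Ha; move: (H b); rewrite Hb Hr.
have finj : {in SA &, injective f}.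
  move=> a a' Ha Ha' E; have /andP[Hb Hr] := fP a Ha; have /andP[_ Hr'] := fP a' Ha'.
  by apply: (Hinj a a' (f a)) => //; rewrite E.
rewrite -(card_in_imset finj); apply: subset_leq_card.
by apply/subsetP => _ /imsetP[a Ha ->]; have /andP[] := fP a Ha.
Qed.

Lemma card_eq_rel (A B : finType) (SA : {set A}) (SB : {set B}) (R : A -> B -> bool) :
  (forall a, a \in SA -> exists b, (b \in SB) && R a b) ->
  (forall b, b \in SB -> exists a, (a \in SA) && R a b) ->
  (forall a b b', a \in SA -> b \in SB -> b' \in SB -> R a b -> R a b' -> b = b') ->
  (forall a a' b, a \in SA -> a' \in SA -> b \in SB -> R a b -> R a' b -> a = a') ->
  #|SA| = #|SB|.
Proof.
move=> totA totB funA funB; apply/eqP; rewrite eqn_leq (card_le_rel totA funB) /=.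
apply: (@card_le_rel _ _ _ _ (fun b a => R a b)) => // b b' a Hb Hb' Ha.
exact: funA.
Qed.

Section AffinePlane.
Variables (X Y : finType) (J : X -> Y -> bool).
Hypothesis HA : affine_plane J.

Lemma aff_join p q : p != q -> exists S, J p S && J q S.
Proof. by move=> pq; case: (HA.1 p q pq) => S [HS _]; exists S. Qed.

Lemma aff_line_uniq p q S T : p != q -> J p S -> J q S -> J p T -> J q T -> S = T.
Proof.
move=> pq pS qS pT qT; case: (HA.1 p q pq) => U [_ HU].
by rewrite -(HU S) ?pS ?qS // (HU T) ?pT ?qT.
Qed.

Definition disj (S T : Y) := [forall q, ~~ (J q S && J q T)].

Lemma disjP S T q : disj S T -> J q S -> J q T -> False.
Proof. by move=> /forallP/(_ q); rewrite negb_and => /orP[]/negP. Qed.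

Lemma aff_parallel u S : ~~ J u S -> exists T, J u T && disj S T.
Proof. by move=> uS; case: (HA.2.1 u S uS) => T [HT _]; exists T. Qed.

Lemma aff_parallel_uniq u S T T' :
  ~~ J u S -> J u T -> J u T' -> disj S T -> disj S T' -> T = T'.
Proof.
move=> uS uT uT' dT dT'; case: (HA.2.1 u S uS) => U [_ HU].
by rewrite -(HU T) ?uT ?dT // (HU T') ?uT' ?dT'.
Qed.

Lemma aff_point_off S : exists u, ~~ J u S.
Proof.
case: HA => _ [_ [a [b [c [_ Hn]]]]].
case Ha: (J a S); last by exists a; rewrite Ha.
case Hb: (J b S); last by exists b; rewrite Hb.
case Hc: (J c S); last by exists c; rewrite Hc.
by case/negP: Hn; apply/existsP; exists S; rewrite Ha Hb Hc.
Qed.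

Definition coll x y z := [exists T, [&& J x T, J y T & J z T]].

Lemma coll_perm x y z : coll x y z -> coll y x z /\ coll x z y.
Proof.
by move=> /existsP[T /and3P[h1 h2 h3]]; split; apply/existsP; exists T; apply/and3P.
Qed.

Lemma aff_triangle q : exists u w, [/\ u != q, w != q, u != w & ~~ coll q u w].
Proof.
case: HA => _ [_ [a [b [c [Hu Habc]]]]].
move: Hu; rewrite /= !inE !negb_or => /andP[/andP[ab ac] /andP[bc _]].
have {}Habc : ~~ coll a b c by [].
case: (eqVneq q a) => [->|qa].
  by exists b, c; split=> //; rewrite eq_sym.
case: (eqVneq q b) => [->|qb].
  exists a, c; split=> //; try by rewrite eq_sym.
  by apply: contra Habc => /coll_perm[].
case: (eqVneq q c) => [->|qc].
  exists a, b; split=> //; try by rewrite eq_sym.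
  by apply: contra Habc => /coll_perm[/coll_perm[]].
case Hab: (coll q a b); last by exists a, b; split; rewrite ?Hab // eq_sym.
case Hac: (coll q a c); last by exists a, c; split; rewrite ?Hac // eq_sym.
case/negP: Habc.
move: Hab Hac => /existsP[T /and3P[qT aT bT]] /existsP[T' /and3P[qT' aT' cT']].
rewrite (aff_line_uniq qa qT' aT' qT aT) in cT'.
by apply/existsP; exists T; rewrite aT bT cT'.
Qed.

Lemma aff_second_point S q : J q S -> exists q', (q' != q) && J q' S.
Proof.
move=> qS; case: (boolP [exists q', (q' != q) && J q' S]) => [/existsP//|/existsPn Hno].
exfalso.
have onlyq z : J z S -> z = q.
  by move=> zS; move: (Hno z); rewrite zS andbT negbK => /eqP.
have [u [w [uq wq uw Hc]]] := aff_triangle q.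
have qw : q != w by rewrite eq_sym.
have [N /andP[qN wN]] := aff_join qw.
have uN : ~~ J u N.
  by apply: contra Hc => uN; apply/existsP; exists N; rewrite qN uN wN.
have [N' /andP[uN' dN']] := aff_parallel uN.
have [M /andP[uM wM]] := aff_join uw.
have uS : ~~ J u S by apply/negP => /onlyq /eqP; rewrite (negPf uq).
have disjS T : ~~ J q T -> disj S T.
  by move=> qT; apply/forallP => z; apply/negP => /andP[/onlyq ->]; apply/negP.
have qM : ~~ J q M.
  by apply: contra Hc => qM; apply/existsP; exists M; rewrite qM uM wM.
have qN' : ~~ J q N' by apply/negP => qN'; exact: (disjP dN' qN qN').
rewrite (aff_parallel_uniq uS uM uN' (disjS _ qM) (disjS _ qN')) in wM.
exact: (disjP dN' wN wM).
Qed.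

(* A line has one point less than the pencil of a point off it: the lines
   through u are the joins of u with the points of S, plus the parallel. *)
Lemma aff_pencil_size u S : ~~ J u S -> #|[set q | J q S]|.+1 = #|[set T | J u T]|.
Proof.
move=> uS; have [P /andP[uP dP]] := aff_parallel uS.
have neq_u z : J z S -> u != z by move=> zS; apply: contra uS => /eqP ->.
rewrite (cardsD1 P [set T | J u T]) inE uP add1n; congr _.+1.
apply: (@card_eq_rel _ _ _ _ (fun z T => J z T)).
- move=> z; rewrite inE => zS; have [T /andP[uT zT]] := aff_join (neq_u z zS).
  exists T; rewrite !inE uT zT !andbT.
  by apply/negP => /eqP ET; rewrite ET in zT; exact: (disjP dP zS zT).
- move=> T; rewrite !inE => /andP[TP uT].
  case: (boolP [exists z, (z \in [set q | J q S]) && J z T]) => [/existsP//|/existsPn Hno].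
  have dT : disj S T.
    by apply/forallP => z; move: (Hno z); rewrite inE.
  by case/eqP: TP; apply: (aff_parallel_uniq uS uT uP dT dP).
- move=> z T T'; rewrite !inE => zS /andP[_ uT] /andP[_ uT'] zT zT'.
  exact: (aff_line_uniq (neq_u z zS) uT zT uT' zT').
- move=> z z' T; rewrite !inE => zS z'S /andP[_ uT] zT z'T.
  case: (eqVneq z z') => // zz'; exfalso.
  by rewrite (aff_line_uniq zz' zS z'S zT z'T) uT in uS.
Qed.

End AffinePlane.

Section ProjectivePlane.
Variables (Qpt Qln : finType) (QI : Qpt -> Qln -> bool).
Hypothesis HQ : proj_plane QI.

Lemma proj_join P R : P != R -> exists k, QI P k && QI R k.
Proof. by move=> PR; case: (HQ.1 P R PR) => k [Hk _]; exists k. Qed.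

Lemma proj_line_uniq P R k k' : P != R -> QI P k -> QI R k -> QI P k' -> QI R k' -> k = k'.
Proof.
move=> PR Pk Rk Pk' Rk'; case: (HQ.1 P R PR) => U [_ HU].
by rewrite -(HU k) ?Pk ?Rk // (HU k') ?Pk' ?Rk'.
Qed.

Lemma proj_meet k k' : k != k' -> exists P, QI P k && QI P k'.
Proof. by move=> kk'; case: (HQ.2.1 k k' kk') => P [HP _]; exists P. Qed.

Lemma proj_point_off l : exists R, ~~ QI R l.
Proof.
case: HQ => _ [_ [a [b [c [d [_ [Habc _]]]]]]].
case Ha: (QI a l); last by exists a; rewrite Ha.
case Hb: (QI b l); last by exists b; rewrite Hb.
case Hc: (QI c l); last by exists c; rewrite Hc.
by case/negP: Habc; apply/existsP; exists l; rewrite Ha Hb Hc.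
Qed.

Lemma proj_line_through P : exists l, QI P l.
Proof.
case: HQ => _ [_ [a [b [c [d [Hu _]]]]]].
move: Hu; rewrite /= !inE !negb_or => /andP[/andP[ab _] _].
case: (eqVneq P a) => [->|Pa].
  by have [k /andP[ak _]] := proj_join ab; exists k.
by have [k /andP[Pk _]] := proj_join Pa; exists k.
Qed.

Lemma proj_second_line P l : QI P l -> exists k, (k != l) && QI P k.
Proof.
move=> Pl; have [R Rl] := proj_point_off l.
have PR : P != R by apply: contra Rl => /eqP <-.
have [k /andP[Pk Rk]] := proj_join PR; exists k; rewrite Pk andbT.
by apply: contra Rl => /eqP <-.
Qed.

Lemma proj_second_point P l : QI P l -> exists Q, (Q != P) && QI Q l.
Proof.
move=> Pl; have [R Rl] := proj_point_off l.
have PR : P != R by apply: contra Rl => /eqP <-.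
have [k0 /andP[Pk0 Rk0]] := proj_join PR.
have [U Uk0] := proj_point_off k0.
have RU : R != U by apply: contra Uk0 => /eqP <-.
have [k /andP[Rk Uk]] := proj_join RU.
have kl : k != l by apply: contra Rl => /eqP <-.
have [Q /andP[Qk Ql]] := proj_meet kl.
exists Q; rewrite Ql andbT; apply/negP => /eqP EQ; rewrite EQ in Qk.
by rewrite (proj_line_uniq PR Pk0 Rk0 Qk Rk) Uk in Uk0.
Qed.

Definition pencil_size P := #|[set k | QI P k]|.

(* Projection from a point R off l puts l in bijection with the pencil of R. *)
Lemma line_size_pencil R l : ~~ QI R l -> #|[set P | QI P l]| = pencil_size R.
Proof.
move=> Rl; have neq_R P : QI P l -> P != R by move=> Pl; apply: contra Rl => /eqP <-.
apply: (@card_eq_rel _ _ _ _ (fun P k => QI P k && QI R k)).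
- move=> P; rewrite inE => Pl; have [k /andP[Pk Rk]] := proj_join (neq_R P Pl).
  by exists k; rewrite inE Pk Rk.
- move=> k; rewrite inE => Rk; have kl : k != l by apply: contra Rl => /eqP <-.
  by have [P /andP[Pk Pl]] := proj_meet kl; exists P; rewrite inE Pl Pk Rk.
- move=> P k k'; rewrite !inE => Pl _ _ /andP[Pk Rk] /andP[Pk' Rk'].
  exact: (proj_line_uniq (neq_R P Pl) Pk Rk Pk' Rk').
- move=> P P' k; rewrite !inE => Pl P'l Rk /andP[Pk _] /andP[P'k _].
  case: (eqVneq P P') => // PP'; exfalso.
  by move: Rk; rewrite (proj_line_uniq PP' Pk P'k Pl P'l) (negPf Rl).
Qed.

(* When every point is on at least three lines, all pencils have the same
   size: P and Q are both off a suitable line through a third point R. *)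
Lemma pencil_size_const :
  (forall R, 2 < pencil_size R) -> forall P Q, pencil_size P = pencil_size Q.
Proof.
move=> three P Q; case: (eqVneq P Q) => [->//|PQ].
have [k /andP[Pk Qk]] := proj_join PQ.
have [R Rk] := proj_point_off k.
have RP : R != P by apply: contra Rk => /eqP ->.
have RQ : R != Q by apply: contra Rk => /eqP ->.
have [kP /andP[RkP PkP]] := proj_join RP.
have [kQ /andP[RkQ QkQ]] := proj_join RQ.
have [l [Rl lP lQ]] : exists l, [/\ QI R l, l != kP & l != kQ].
  have /card_gt2P[x [y [z [[Rx Ry Rz] [xy yz zx]]]]] := three R.
  rewrite !inE in Rx Ry Rz.
  have good t : QI R t -> t != kP -> t != kQ -> exists l, [/\ QI R l, l != kP & l != kQ].
    by move=> *; exists t.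
  case: (eqVneq x kP) => [xP|xP].
    subst x; case: (eqVneq y kQ) => [yQ|yQ]; last by apply: (good y); rewrite // eq_sym.
    by subst y; apply: (good z); rewrite // eq_sym.
  case: (eqVneq x kQ) => [xQ|xQ]; last exact: (good x).
  subst x; case: (eqVneq y kP) => [yP|yP]; last by apply: (good y); rewrite // eq_sym.
  by subst y; apply: (good z); rewrite // eq_sym.
have Pl : ~~ QI P l by apply: contra lP => Pl; apply/eqP/(proj_line_uniq RP).
have Ql : ~~ QI Q l by apply: contra lQ => Ql; apply/eqP/(proj_line_uniq RQ).
by rewrite -(line_size_pencil Pl) (line_size_pencil Ql).
Qed.

End ProjectivePlane.

Section Hjelmslev.
Variables (Pt Ln Qpt Qln : finType) (I : Pt -> Ln -> bool) (QI : Qpt -> Qln -> bool)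
  (phiP : Pt -> Qpt) (phiL : Ln -> Qln).
Hypothesis Hjoin : forall p q, exists g, I p g && I q g.
Hypothesis Hmeet : forall g h, exists p, I p g && I p h.
Hypothesis HQ : proj_plane QI.
Hypothesis phiP_surj : forall y, exists x, phiP x = y.
Hypothesis phiL_surj : forall y, exists x, phiL x = y.
Hypothesis phi_inc : forall p g, I p g -> QI (phiP p) (phiL g).
Hypothesis phiP_nb : forall p q, phiP p = phiP q <-> nbP I p q.
Hypothesis phiL_nb : forall g h, phiL g = phiL h <-> nbL I g h.
Hypothesis nbhd_affine : forall p, affine_plane (@restr_inc Pt Ln I p).

Lemma nbP_phi p q : nbP I p q = (phiP p == phiP q).
Proof. by apply/idP/eqP => /phiP_nb. Qed.

Lemma far_line_uniq p q g h :
  phiP p != phiP q -> I p g -> I q g -> I p h -> I q h -> g = h.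
Proof.
move=> pq pg qg ph qh; case: (eqVneq g h) => // gh; exfalso.
suff : nbP I p q by rewrite nbP_phi (negPf pq).
by apply/orP; right; apply/card_gt1P; exists g, h; rewrite !inE pg qg ph qh.
Qed.

Lemma two_points_nbL p q g h :
  p != q -> I p g -> I q g -> I p h -> I q h -> phiL g = phiL h.
Proof.
move=> pq pg qg ph qh; apply/phiL_nb/orP; right.
by apply/card_gt1P; exists p, q; rewrite !inE pg qg ph qh.
Qed.

(* A line h passes through the neighbour class over every point of phiL h:
   it meets any line h' whose image is another line through P. *)
Lemma line_meets_class h P : QI P (phiL h) -> exists p, I p h && (phiP p == P).
Proof.
move=> Ph; have [k /andP[kh Pk]] := proj_second_line HQ Ph.
have [h' Eh'] := phiL_surj k; subst k.
have [p /andP[ph ph']] := Hmeet h h'; exists p; rewrite ph /=.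
case: (eqVneq (phiP p) P) => // pP; case/eqP: kh.
exact: (proj_line_uniq HQ pP (phi_inc ph') Pk (phi_inc ph) Ph).
Qed.

(* A chosen point over each point P of QI, whose neighbourhood plays the
   role of the affine plane A_P. *)
Lemma exists_preimage P : exists x, phiP x == P.
Proof. by have [x <-] := phiP_surj P; exists x. Qed.
Definition rep P := xchoose (exists_preimage P).
Lemma repE P : phiP (rep P) = P.
Proof. exact/eqP/(xchooseP (exists_preimage P)). Qed.

Local Notation Pts P := {q : Pt | nbP I q (rep P)}.
Local Notation Lns P := {S : {set Pt} | S \in restr_lines I (rep P)}.
Local Notation J P := (@restr_inc Pt Ln I (rep P)).
Local Notation rs P g := (restr I (rep P) g).

Lemma in_nbhd P q : nbP I q (rep P) = (phiP q == P).
Proof. by rewrite nbP_phi repE. Qed.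

Definition mkPt P q (qP : phiP q == P) : Pts P := exist _ q (etrans (in_nbhd P q) qP).

Lemma phi_val P (q : Pts P) : phiP (val q) = P.
Proof. by apply/eqP; rewrite -in_nbhd (valP q). Qed.

Lemma in_restr P g q : (q \in rs P g) = I q g && (phiP q == P).
Proof. by rewrite inE in_nbhd. Qed.

Lemma restr_inc_val P (q : Pts P) g : (val q \in rs P g) = I (val q) g.
Proof. by rewrite inE (valP q) andbT. Qed.

Lemma restr_incE P (q : Pts P) (S : Lns P) g : val S = rs P g -> J P q S = I (val q) g.
Proof. by rewrite /restr_inc => ->; apply: restr_inc_val. Qed.

Lemma restr_is_line P g q : I q g -> phiP q == P -> rs P g \in restr_lines I (rep P).
Proof.
move=> qg qP; rewrite inE; apply/andP; split; last by apply/existsP; exists g.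
by apply/set0Pn; exists q; rewrite in_restr qg.
Qed.

Definition mkLn P g q (qg : I q g) (qP : phiP q == P) : Lns P :=
  exist _ (rs P g) (restr_is_line qg qP).

Definition pi P l : {set Lns P} :=
  [set S : Lns P | [exists g, (phiL g == l) && (val S == rs P g)]].

Lemma piP P l (S : Lns P) : reflect (exists g, phiL g = l /\ val S = rs P g) (S \in pi P l).
Proof.
rewrite inE; apply: (iffP existsP) => [[g /andP[/eqP gl /eqP Sg]]|[g [gl Sg]]].
  by exists g.
by exists g; rewrite gl Sg !eqxx.
Qed.

Lemma mkLn_pi P l g q (qg : I q g) (qP : phiP q == P) :
  phiL g = l -> mkLn qg qP \in pi P l.
Proof. by move=> gl; apply/piP; exists g. Qed.

(* Every point of the neighbourhood of P is on some line of pi(P,l). *)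
Lemma pi_cover P l (q : Pts P) : QI P l -> exists S : Lns P, (S \in pi P l) && J P q S.
Proof.
move=> Pl; have [Q /andP[QP Ql]] := proj_second_point HQ Pl.
have [y yQ] := phiP_surj Q.
have [g /andP[qg yg]] := Hjoin (val q) y.
have qP : phiP (val q) == P by rewrite phi_val.
have gl : phiL g = l.
  have := phi_inc qg; have := phi_inc yg; rewrite phi_val yQ => Qg Pg.
  by apply: (proj_line_uniq HQ (P := P) (R := Q)) => //; rewrite eq_sym.
by exists (mkLn qg qP); rewrite mkLn_pi // /restr_inc restr_inc_val.
Qed.

(* ... and on only one: two distinct lines over l through q share a second
   point z; if z is a neighbour of P the restrictions share two points, and
   otherwise the lines themselves coincide. *)
Lemma pi_uniq P l (q : Pts P) S S' :
  S \in pi P l -> S' \in pi P l -> J P q S -> J P q S' -> S = S'.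
Proof.
move=> /piP[g [gl ES]] /piP[g' [g'l ES']]; rewrite (restr_incE _ ES) (restr_incE _ ES').
move=> qg qg'; case: (eqVneq g g') => [E|gg']; first by apply: val_inj; rewrite ES ES' E.
have : nbL I g g' by apply/phiL_nb; rewrite gl g'l.
rewrite /nbL (negPf gg') /= => /card_gt1P[z1 [z2 [z1gg' z2gg' z12]]].
have [z [zq zg zg']] : exists z, [/\ z != val q, I z g & I z g'].
  move: z1gg' z2gg'; rewrite !inE => /andP[z1g z1g'] /andP[z2g z2g'].
  case: (eqVneq z1 (val q)) => [E|ne]; last by exists z1.
  by exists z2; rewrite -E eq_sym.
case: (eqVneq (phiP z) P) => [zP|zP]; last first.
  by case/eqP: gg'; apply: (far_line_uniq (p := z) (q := val q)); rewrite ?phi_val.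
have zq' : mkPt (introT eqP zP) != q by apply: contra zq => /eqP <-.
apply: (aff_line_uniq (nbhd_affine (rep P)) zq');
  by rewrite ?(restr_incE _ ES) ?(restr_incE _ ES').
Qed.

(* pi(P,l) is the parallel class of any of its lines: a line T parallel to S
   is, by uniqueness of parallels, the line of pi(P,l) through a point of T. *)
Lemma pi_par_class P l S : QI P l -> S \in pi P l -> par_class (J P) S = pi P l.
Proof.
move=> Pl HS; apply/setP => T; rewrite /par_class inE /parallel.
case: (eqVneq S T) => [<-|ST] /=; first by rewrite HS.
apply/idP/idP => [dT|HT]; last first.
  apply/forallP => w; apply/negP => /andP[wS wT].
  by case/eqP: ST; apply: (pi_uniq HS HT wS wT).
have := valP T; rewrite inE => /andP[/set0Pn[z zT] /existsP[g /eqP ET]].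
have zX : nbP I z (rep P) by move: zT; rewrite ET inE => /andP[].
pose zz : Pts P := exist _ z zX.
have [U /andP[HU zU]] := pi_cover zz Pl.
have zT' : J P zz T by [].
have zS : ~~ J P zz S by move/forallP: dT => /(_ zz); rewrite zT' andbT.
have dU : disj (J P) S U.
  apply/forallP => w; apply/negP => /andP[wS wU].
  by move: zS; rewrite (pi_uniq HS HU wS wU) zU.
by rewrite (aff_parallel_uniq (nbhd_affine (rep P)) zS zT' zU dT dU).
Qed.

Lemma restr_in_pi P (S : Lns P) : exists l, QI P l && (S \in pi P l).
Proof.
have := valP S; rewrite inE => /andP[/set0Pn[z zS] /existsP[g /eqP ES]].
exists (phiL g); apply/andP; split; last by apply/piP; exists g.
by move: zS; rewrite ES in_restr => /andP[zg /eqP <-]; apply: phi_inc.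
Qed.

Definition centre P : Pts P := mkPt (introT eqP (repE P)).

(* Distinct lines through P give distinct classes: a common restriction
   contains two points, which forces the lines over l and l' to be
   neighbours. *)
Lemma pi_inj P l l' : QI P l -> QI P l' -> pi P l = pi P l' -> l = l'.
Proof.
move=> Pl Pl' E; have [S /andP[HS cS]] := pi_cover (centre P) Pl.
have HS' : S \in pi P l' by rewrite -E.
have [q' /andP[qc q'S]] := aff_second_point (nbhd_affine (rep P)) cS.
have /piP[g [<- ES]] := HS; have /piP[g' [<- ES']] := HS'.
have cg : I (val (centre P)) g by rewrite -(restr_incE _ ES).
have q'g : I (val q') g by rewrite -(restr_incE _ ES).
have cg' : I (val (centre P)) g' by rewrite -(restr_incE _ ES').
have q'g' : I (val q') g' by rewrite -(restr_incE _ ES').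
exact: (two_points_nbL (qc : val q' != val (centre P)) q'g cg q'g' cg').
Qed.

Lemma pi_par_classes P l : QI P l -> pi P l \in par_classes (J P).
Proof.
move=> Pl; have [S /andP[HS _]] := pi_cover (centre P) Pl.
by rewrite -(pi_par_class Pl HS); apply: imset_f.
Qed.

Lemma par_classes_pi P C : C \in par_classes (J P) -> exists l, QI P l /\ pi P l = C.
Proof.
move=> /imsetP[S _ ->]; have [l /andP[Pl HS]] := restr_in_pi S.
by exists l; rewrite (pi_par_class Pl HS).
Qed.

Lemma pi_classes_distinct P l l' (S T : Lns P) : QI P l -> QI P l' -> l != l' ->
  S \in pi P l -> T \in pi P l' -> T \notin par_class (J P) S.
Proof.
move=> Pl Pl' ll' HS HT; rewrite (pi_par_class Pl HS); apply: contra ll' => HT'.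
by apply/eqP/(pi_inj Pl Pl'); rewrite -(pi_par_class Pl HT') (pi_par_class Pl' HT).
Qed.

Lemma pi_lines_meet P l l' (S T : Lns P) : QI P l -> QI P l' -> l != l' ->
  S \in pi P l -> T \in pi P l' -> (S != T) /\ exists z, J P z S && J P z T.
Proof.
move=> Pl Pl' ll' HS HT; have nST := pi_classes_distinct Pl Pl' ll' HS HT.
split; first by apply: contra nST => /eqP <-; rewrite inE /parallel eqxx.
case: (boolP [exists z, J P z S && J P z T]) => [/existsP//|/existsPn Hno].
by case/negP: nST; rewrite inE /parallel; apply/orP; right; apply/forallP.
Qed.

(* Lines of the neighbourhood through a point correspond to the lines of QI
   through P, one per class pi(P,l). *)
Lemma nbhd_pencil_size P (q : Pts P) : #|[set S | J P q S]| = pencil_size QI P.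
Proof.
symmetry; apply: (@card_eq_rel _ _ _ _ (fun l S => S \in pi P l)).
- move=> l; rewrite inE => Pl; have [S /andP[HS qS]] := pi_cover q Pl.
  by exists S; rewrite inE qS HS.
- by move=> S _; have [l /andP[Pl HS]] := restr_in_pi S; exists l; rewrite inE Pl HS.
- move=> l S S' _ qS qS' HS HS'; rewrite !inE in qS qS'.
  exact: (pi_uniq HS HS' qS qS').
- move=> l l' S Pl Pl' _ HS HS'; rewrite !inE in Pl Pl'.
  by apply: (pi_inj Pl Pl'); rewrite -(pi_par_class Pl HS) (pi_par_class Pl' HS').
Qed.

Lemma nbhd_line_size P (S : Lns P) : #|[set q | J P q S]|.+1 = pencil_size QI P.
Proof.
have [u uS] := aff_point_off (nbhd_affine (rep P)) S.
by rewrite (aff_pencil_size (nbhd_affine (rep P)) uS) nbhd_pencil_size.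
Qed.

(* A neighbourhood line has two points, hence every pencil of QI has at
   least three lines. *)
Lemma pencil_size_ge3 P : 2 < pencil_size QI P.
Proof.
have [u [w [_ _ uw _]]] := aff_triangle (nbhd_affine (rep P)) (centre P).
have [S /andP[uS _]] := aff_join (nbhd_affine (rep P)) uw.
have [u' /andP[u'u u'S]] := aff_second_point (nbhd_affine (rep P)) uS.
rewrite -(nbhd_line_size S) ltnS; apply/card_gt1P; exists u, u'.
by rewrite !inE uS u'S eq_sym.
Qed.

(* Each line T of another class meets every line of pi(P,l) exactly once. *)
Lemma pi_size P l : QI P l -> #|pi P l| = (pencil_size QI P).-1.
Proof.
move=> Pl; have [l' /andP[l'l Pl']] := proj_second_line HQ Pl; rewrite eq_sym in l'l.
have [T /andP[HT _]] := pi_cover (centre P) Pl'.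
rewrite -(nbhd_line_size T) /=; symmetry.
apply: (@card_eq_rel _ _ _ _ (fun z S => J P z S)).
- move=> z _; have [S /andP[HS zS]] := pi_cover z Pl; by exists S; rewrite HS zS.
- move=> S HS; have [_ [z /andP[zS zT]]] := pi_lines_meet Pl Pl' l'l HS HT.
  by exists z; rewrite inE zS zT.
- by move=> z S S' _ HS HS' zS zS'; apply: (pi_uniq HS HS' zS zS').
- move=> z z' S zT z'T HS zS z'S; rewrite !inE in zT z'T.
  case: (eqVneq z z') => // zz'; have [ST _] := pi_lines_meet Pl Pl' l'l HS HT.
  by case/eqP: ST; apply: (aff_line_uniq (nbhd_affine (rep P)) zz' zS z'S zT z'T).
Qed.

(* The points of the neighbourhood are coordinatised by the pairs of lines
   from two distinct classes pi(P,l), pi(P,l') through them. *)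
Lemma nbhd_size P : #|{: Pts P}| = (pencil_size QI P).-1 ^ 2.
Proof.
have [l Pl] := proj_line_through HQ P.
have [l' /andP[l'l Pl']] := proj_second_line HQ Pl; rewrite eq_sym in l'l.
rewrite -cardsT expnS expn1 -{1}(pi_size Pl) -(pi_size Pl') -cardsX.
apply: (@card_eq_rel _ _ _ _ (fun z ST => J P z ST.1 && J P z ST.2)).
- move=> z _; have [S /andP[HS zS]] := pi_cover z Pl.
  have [T /andP[HT zT]] := pi_cover z Pl'.
  by exists (S, T); rewrite in_setX HS HT zS zT.
- move=> [S T]; rewrite in_setX /= => /andP[HS HT].
  by have [_ [z zST]] := pi_lines_meet Pl Pl' l'l HS HT; exists z; rewrite inE.
- move=> z [S T] [S' T']; rewrite !in_setX /= => _ /andP[HS HT] /andP[HS' HT'].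
  by move=> /andP[zS zT] /andP[zS' zT']; rewrite (pi_uniq HS HS' zS zS') (pi_uniq HT HT' zT zT').
- move=> z z' [S T]; rewrite !in_setX /= => _ _ /andP[HS HT] /andP[zS zT] /andP[z'S z'T].
  case: (eqVneq z z') => // zz'; have [ST _] := pi_lines_meet Pl Pl' l'l HS HT.
  by case/eqP: ST; apply: (aff_line_uniq (nbhd_affine (rep P)) zz' zS z'S zT z'T).
Qed.

Lemma par_classes_size P : #|par_classes (J P)| = pencil_size QI P.
Proof.
symmetry; apply: (@card_eq_rel _ _ _ _ (fun l C => C == pi P l)).
- move=> l; rewrite inE => Pl; exists (pi P l); rewrite eqxx andbT.
  exact: pi_par_classes.
- move=> C /par_classes_pi[l [Pl <-]]; by exists l; rewrite inE Pl eqxx.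
- by move=> l C C' _ _ _ /eqP -> /eqP ->.
- by move=> l l' C; rewrite !inE => Pl Pl' _ /eqP -> /eqP E; apply: (pi_inj Pl Pl').
Qed.

(* A line over l is determined by its restrictions at two distinct points of
   l: points of it over P and over Q are not neighbours. *)
Lemma fibre_line_inj l P Q g g' : phiL g = l -> phiL g' = l -> P != Q -> QI P l -> QI Q l ->
  rs P g = rs P g' -> rs Q g = rs Q g' -> g = g'.
Proof.
move=> gl g'l PQ Pl Ql EP EQ.
have [z /andP[zg zP]] : exists z, I z g && (phiP z == P) by apply: line_meets_class; rewrite gl.
have [w /andP[wg wQ]] : exists w, I w g && (phiP w == Q) by apply: line_meets_class; rewrite gl.
have : z \in rs P g' by rewrite -EP in_restr zg zP.
rewrite in_restr => /andP[zg' _].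
have : w \in rs Q g' by rewrite -EQ in_restr wg wQ.
rewrite in_restr => /andP[wg' _].
by apply: (far_line_uniq (p := z) (q := w)); rewrite ?(eqP zP) ?(eqP wQ).
Qed.

(* ... and every pair of restrictions occurs: the lines over l correspond to
   the pairs of lines of pi(P,l) and pi(Q,l). *)
Lemma fibre_size l P Q : QI P l -> QI Q l -> P != Q ->
  #|[set g | phiL g == l]| = (pencil_size QI P).-1 * (pencil_size QI Q).-1.
Proof.
move=> Pl Ql PQ; rewrite -(pi_size Pl) -(pi_size Ql) -cardsX.
apply: (@card_eq_rel _ _ _ _ (fun g ST => (val ST.1 == rs P g) && (val ST.2 == rs Q g))).
- move=> g; rewrite inE => /eqP gl.
  have [z /andP[zg zP]] : exists z, I z g && (phiP z == P) by apply: line_meets_class; rewrite gl.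
  have [w /andP[wg wQ]] : exists w, I w g && (phiP w == Q) by apply: line_meets_class; rewrite gl.
  exists (mkLn zg zP, mkLn wg wQ).
  by rewrite in_setX /= (mkLn_pi zg zP gl) (mkLn_pi wg wQ gl) !eqxx.
- move=> [S T]; rewrite in_setX /= => /andP[HS HT].
  have /piP[g0 [_ ES]] := HS; have /piP[h0 [_ ET]] := HT.
  have := valP S; rewrite inE => /andP[/set0Pn[z zS] _].
  have := valP T; rewrite inE => /andP[/set0Pn[w wT] _].
  have zP : phiP z == P by move: zS; rewrite ES in_restr => /andP[].
  have wQ : phiP w == Q by move: wT; rewrite ET in_restr => /andP[].
  have [g /andP[zg wg]] := Hjoin z w.
  have gl : phiL g = l.
    have := phi_inc zg; have := phi_inc wg; rewrite (eqP zP) (eqP wQ) => Qg Pg.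
    exact: (proj_line_uniq HQ PQ Pg Qg Pl Ql).
  have zS' : J P (mkPt zP) S by [].
  have wT' : J Q (mkPt wQ) T by [].
  have zSg : J P (mkPt zP) (mkLn zg zP) by rewrite /restr_inc in_restr zg zP.
  have wTg : J Q (mkPt wQ) (mkLn wg wQ) by rewrite /restr_inc in_restr wg wQ.
  exists g; rewrite inE gl eqxx /=.
  by rewrite (pi_uniq HS (mkLn_pi zg zP gl) zS' zSg) (pi_uniq HT (mkLn_pi wg wQ gl) wT' wTg) !eqxx.
- move=> g [S T] [S' T'] _ _ _ /andP[/eqP SP /eqP TQ] /andP[/eqP S'P /eqP T'Q].
  by congr pair; apply: val_inj; [rewrite SP S'P | rewrite TQ T'Q].
- move=> g g' [S T] gl g'l _ /andP[/eqP SP /eqP TQ] /andP[/eqP SP' /eqP TQ'].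
  move: gl g'l; rewrite !inE => /eqP gl /eqP g'l.
  by apply: (fibre_line_inj gl g'l PQ Pl Ql); rewrite -?SP -?TQ.
Qed.

Definition nbhd_pt P : finType := (Pts P : finType).
Definition nbhd_ln P : finType := (Lns P : finType).
Definition nbhd_inc P : nbhd_pt P -> nbhd_ln P -> bool := J P.
Definition fibre l : finType := ({g : Ln | phiL g == l} : finType).

(* A default line of the neighbourhood, needed to index the classes. *)
Lemma exists_nbhd_line P : exists S : Lns P, true.
Proof.
have [l Pl] := proj_line_through HQ P.
by have [S _] := pi_cover (centre P) Pl; exists S.
Qed.
Definition some_line P : Lns P := xchoose (exists_nbhd_line P).

(* From now on all pencils of QI have n+2 lines, i.e. the order is n+1. *)
Section Order.
Variable n : nat.
Hypothesis pencil_n : forall P, pencil_size QI P = n.+2.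

Definition beta P l (i : 'I_n.+1) : Lns P := nth (some_line P) (enum (pi P l)) i.

Lemma size_enum_pi P l : QI P l -> size (enum (pi P l)) = n.+1.
Proof. by move=> Pl; rewrite -cardE pi_size // pencil_n. Qed.

Lemma beta_in P l i : QI P l -> beta P l i \in pi P l.
Proof. by move=> Pl; rewrite -mem_enum; apply: mem_nth; rewrite size_enum_pi. Qed.

Lemma beta_inj P l : QI P l -> injective (beta P l).
Proof.
move=> Pl i j /eqP; rewrite /beta nth_uniq ?size_enum_pi ?enum_uniq //.
by move=> /eqP; apply: ord_inj.
Qed.

Lemma beta_surj P l S : QI P l -> S \in pi P l -> exists i, beta P l i = S.
Proof.
move=> Pl HS; have Si : index S (enum (pi P l)) < n.+1.
  by rewrite -(size_enum_pi Pl) index_mem mem_enum.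
by exists (Ordinal Si); rewrite /beta /= nth_index // mem_enum.
Qed.

Definition entry l (r : fibre l) P : 'I_n.+1 :=
  odflt ord0 [pick i | val (beta P l i) == rs P (val r)].

Lemma beta_entry l (r : fibre l) P : QI P l -> val (beta P l (entry r P)) = rs P (val r).
Proof.
move=> Pl; have Pr : QI P (phiL (val r)) by rewrite (eqP (valP r)).
have [p /andP[pr pP]] := line_meets_class Pr.
have [i Ei] := beta_surj Pl (mkLn_pi pr pP (eqP (valP r))).
rewrite /entry; case: pickP => [j /eqP //|noi].
by move: (noi i); rewrite Ei eqxx.
Qed.

Lemma entry_bijective l P Q : QI P l -> QI Q l -> P != Q ->
  bijective (fun r : fibre l => (entry r P, entry r Q)).
Proof.
move=> Pl Ql PQ; apply: inj_card_bij.
  move=> r r' [EP EQ]; apply: val_inj.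
  apply: (fibre_line_inj (eqP (valP r)) (eqP (valP r')) PQ Pl Ql).
    by rewrite -!beta_entry // EP.
  by rewrite -!beta_entry // EQ.
by rewrite card_prod card_ord card_sig -cardsE (fibre_size Pl Ql PQ) !pencil_n.
Qed.

Lemma QI_order : proj_plane_order QI n.+1.
Proof.
split; [exact: HQ | split=> [g|P]; last exact: pencil_n].
by have [R Rg] := proj_point_off HQ g; rewrite (line_size_pencil HQ Rg) pencil_n.
Qed.

Lemma nbhd_order P : affine_plane_order (@nbhd_inc P) n.+1.
Proof.
split; first exact: nbhd_affine.
split; first by rewrite nbhd_size pencil_n.
split; last by rewrite par_classes_size pencil_n.
by move=> S; apply/eqP; rewrite -eqSS nbhd_line_size pencil_n.
Qed.

Lemma entry_OA l : OA_on QI n.+1 l (@entry l).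
Proof. by split=> [|P Q Pl Ql PQ]; [rewrite card_ord | exact: entry_bijective]. Qed.

Lemma pi_admissible : admissible_pi QI nbhd_inc pi.
Proof.
move=> P; split; first by move=> l; apply: pi_par_classes.
by split=> [l l' Pl Pl'|C /par_classes_pi]; first exact: pi_inj.
Qed.

Lemma beta_admissible : admissible_beta QI pi beta.
Proof.
move=> P l Pl; split=> [s|]; first exact: beta_in.
by split=> [|S]; [exact: beta_inj | exact: beta_surj].
Qed.

(* p |-> (phi p, p) and g |-> (phi g, g) is an isomorphism onto the
   constructed structure, since the entry of g at P names its restriction. *)
Lemma construction_iso : inc_iso I (construction_inc QI nbhd_inc entry beta).
Proof.
pose f p : {P : Qpt & nbhd_pt P} := existT _ (phiP p) (mkPt (eqxx (phiP p))).
pose g h : {l : Qln & fibre l} := existT _ (phiL h) (exist _ h (eqxx (phiL h))).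
exists f, g; split; [|split].
- exists (fun x : {P : Qpt & nbhd_pt P} => val (tagged x)) => // [[P [q qP]]].
  have E : phiP q = P by apply/eqP; rewrite -in_nbhd.
  by subst P; rewrite /f; congr existT; apply: val_inj.
- exists (fun x : {l : Qln & fibre l} => val (tagged x)) => // [[l [h hl]]].
  by move: hl (hl) => /eqP E; subst l => hl; rewrite /g; congr existT; apply: val_inj.
move=> p h; rewrite /construction_inc /=.
case Ph: (QI (phiP p) (phiL h)) => /=.
  by rewrite /nbhd_inc /restr_inc /= beta_entry // in_restr eqxx andbT.
by apply/esym/negP => /phi_inc; rewrite Ph.
Qed.

End Order.

Lemma construction_exists :
  exists (m : nat) (Ppt Pln : finType) (PI : Ppt -> Pln -> bool)
         (APt ALn : Ppt -> finType) (AI : forall P, APt P -> ALn P -> bool)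
         (Sym Row : Pln -> finType) (O : forall l, Row l -> Ppt -> Sym l)
         (pi : forall P : Ppt, Pln -> {set ALn P})
         (beta : forall (P : Ppt) (l : Pln), Sym l -> ALn P),
    2 <= m /\
    proj_plane_order PI m /\
    (forall P, affine_plane_order (AI P) m) /\
    (forall l, OA_on PI m l (O l)) /\
    admissible_pi PI AI pi /\
    admissible_beta PI pi beta /\
    inc_iso I (construction_inc PI AI O beta).
Proof.
have [P0 _] : exists P0 : Qpt, true by case: HQ => _ [_ [a _]]; exists a.
have [n EP0] : exists n, pencil_size QI P0 = n.+3.
  by case: (pencil_size QI P0) (pencil_size_ge3 P0) => [|[|[|k]]] // _; exists k.
have pencil_n P : pencil_size QI P = n.+3.
  by rewrite (pencil_size_const HQ pencil_size_ge3 P P0).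
exists n.+2, Qpt, Qln, QI, nbhd_pt, nbhd_ln, nbhd_inc, (fun _ => ('I_n.+2 : finType)),
  fibre, (@entry n.+1), pi, (@beta n.+1).
split=> //; split; first exact: QI_order.
split; first exact: nbhd_order.
split; first exact: entry_OA.
split; first exact: pi_admissible.
by split; [exact: beta_admissible | exact: construction_iso].
Qed.

End Hjelmslev.

Theorem mainTheorem2 (Pt Ln : finType) (I : Pt -> Ln -> bool) :
  two_uniform_PH I ->
  exists (m : nat) (Ppt Pln : finType) (PI : Ppt -> Pln -> bool)
         (APt ALn : Ppt -> finType) (AI : forall P, APt P -> ALn P -> bool)
         (Sym Row : Pln -> finType) (O : forall l, Row l -> Ppt -> Sym l)
         (pi : forall P : Ppt, Pln -> {set ALn P})
         (beta : forall (P : Ppt) (l : Pln), Sym l -> ALn P),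
    2 <= m /\
    proj_plane_order PI m /\
    (forall P, affine_plane_order (AI P) m) /\
    (forall l, OA_on PI m l (O l)) /\
    admissible_pi PI AI pi /\
    admissible_beta PI pi beta /\
    inc_iso I (construction_inc PI AI O beta).
Proof.
move=> [[join [meet [Qpt [Qln [QI [phiP [phiL PH]]]]]]] uniform].
move: PH => [HQ [phiP_surj [phiL_surj [phi_inc [phiP_nb phiL_nb]]]]].
have nbhd_affine p : affine_plane (@restr_inc Pt Ln I p) by case: (uniform p).
exact: (construction_exists join meet HQ phiP_surj phiL_surj phi_inc phiP_nb phiL_nb nbhd_affine).
Qed.
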